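(* Let $E$ be a non-empty cohesive almost zero-dimensional space, and let $Y$ be a completely metrizable separable space containing $E$ as a subspace. Then there is a completely metrizable cohesive almost zero-dimensional space $E'$ with $E\subset E'\subset Y$.
   Context: All spaces are separable and metrizable. A subset $A$ of a space $X$ is a C-set in $X$ if $A$ is an intersection of clopen subsets of $X$. A space $X$ is almost zero-dimensional if every point of $X$ has a neighborhood basis consisting of C-sets in $X$. A space $X$ is cohesive if every point $x\in X$ has a neighborhood which contains no non-empty clopen subset of $X$. *)

From Stdlib Require Export Reals.
Open Scope R_scope.

(* A topology on T is represented by its predicate of open sets. *)
Definition topology (T : Type) := (T -> Prop) -> Prop.

Definition is_metric {X : Type} (d : X -> X -> R) : Prop :=
  (forall x y, 0 <= d x y) /\
  (forall x y, d x y = 0 <-> x = y) /\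
  (forall x y, d x y = d y x) /\
  (forall x y z, d x z <= d x y + d y z).

Definition metric_open {X : Type} (d : X -> X -> R) : topology X :=
  fun U => forall x, U x -> exists eps, 0 < eps /\ forall y, d x y < eps -> U y.

Definition cauchy {X : Type} (d : X -> X -> R) (u : nat -> X) : Prop :=
  forall eps, 0 < eps -> exists N, forall m n, (N <= m)%nat -> (N <= n)%nat -> d (u m) (u n) < eps.

Definition converges {X : Type} (d : X -> X -> R) (u : nat -> X) (l : X) : Prop :=
  forall eps, 0 < eps -> exists N, forall n, (N <= n)%nat -> d (u n) l < eps.

Definition complete_metric {X : Type} (d : X -> X -> R) : Prop :=
  forall u, cauchy d u -> exists l, converges d u l.

Definition countable_set {T : Type} (D : T -> Prop) : Prop :=
  exists f : T -> nat, forall x y, D x -> D y -> f x = f y -> x = y.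

Definition separable {T : Type} (op : topology T) : Prop :=
  exists D : T -> Prop, countable_set D /\
    forall U, op U -> (exists x, U x) -> exists x, D x /\ U x.

Definition completely_metrizable {T : Type} (op : topology T) : Prop :=
  exists d : T -> T -> R, is_metric d /\ complete_metric d /\
    forall U, op U <-> metric_open d U.

Definition subspace {Y : Type} (op : topology Y) (A : Y -> Prop) : topology {y | A y} :=
  fun V => exists U, op U /\ forall z : {y | A y}, V z <-> U (proj1_sig z).

Definition clopen {T : Type} (op : topology T) (A : T -> Prop) : Prop :=
  op A /\ op (fun x => ~ A x).

Definition C_set {T : Type} (op : topology T) (A : T -> Prop) : Prop :=
  exists F : (T -> Prop) -> Prop,
    (forall B, F B -> clopen op B) /\
    forall x, A x <-> (forall B, F B -> B x).

Definition neighborhood {T : Type} (op : topology T) (x : T) (N : T -> Prop) : Prop :=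
  exists U, op U /\ U x /\ forall y, U y -> N y.

Definition almost_zero_dimensional {T : Type} (op : topology T) : Prop :=
  forall x N, neighborhood op x N ->
    exists C, C_set op C /\ neighborhood op x C /\ forall y, C y -> N y.

Definition cohesive {T : Type} (op : topology T) : Prop :=
  forall x, exists N, neighborhood op x N /\
    forall A, clopen op A -> (forall y, A y -> N y) -> ~ (exists y, A y).

(* Alexandrov: for [F] closed and [W n] open in a complete space,
   [d x y + sup_n min (1/(n+1)) |1/r_n x - 1/r_n y|], with [r_n x] the distance from
   [x] to the complement of [W n] truncated at 1, is a complete metric on
   [F ∩ ⋂ W n] inducing the subspace topology.

   [E'] is the closure of [E] intersected with countably many open sets, indexed by a
   countable base of balls, chosen so that every point of [E'] keeps the witnesses [E]
   has.  Cohesiveness: a basic ball containing no non-empty clopen subset of [E] contains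
   none of [E'] either, since [E] is dense in [E'].  Almost zero-dimensionality: for each
   basic ball around a point of [E] pick clopen sets [A_b] of [E] containing it and
   avoiding the ball [b] when possible, and remove the points where the closures of [A_b]
   and of its complement meet; on what is left each closure of [A_b] is clopen, and their
   intersection is a C-set, which is kept inside the target ball by removing the points
   where it escapes.  All removed sets are closed and disjoint from [E]. *)

From Stdlib Require Import Reals Lra Lia Classical ClassicalEpsilon ProofIrrelevance Cantor.
Open Scope R_scope.

Definition unit_sup (S : R -> Prop) (h0 : S 0) (hb : forall t, S t -> t <= 1) : R :=
  proj1_sig (completeness S (ex_intro _ 1 hb) (ex_intro _ 0 h0)).

Section UnitSup.
Variables (S : R -> Prop) (h0 : S 0) (hb : forall t, S t -> t <= 1).

Lemma unit_sup_ub t : S t -> t <= unit_sup S h0 hb.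
Proof. unfold unit_sup; destruct completeness as [m [Hub Hleast]]; apply Hub. Qed.

Lemma unit_sup_least c : (forall t, S t -> t <= c) -> unit_sup S h0 hb <= c.
Proof. unfold unit_sup; destruct completeness as [m [Hub Hleast]]; apply Hleast. Qed.

Lemma unit_sup_ge0 : 0 <= unit_sup S h0 hb.
Proof. exact (unit_sup_ub 0 h0). Qed.

Lemma unit_sup_approx r : r < unit_sup S h0 hb -> exists t, S t /\ r < t.
Proof.
  intro Hr. apply NNPP; intro Hno.
  enough (unit_sup S h0 hb <= r) by lra.
  apply unit_sup_least; intros t Ht.
  destruct (Rle_dec t r) as [|Hgt]; [assumption|].
  exfalso; apply Hno; exists t; split; [exact Ht|lra].
Qed.

End UnitSup.

Definition inv_succ (n : nat) : R := / (INR n + 1).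

Lemma inv_succ_pos n : 0 < inv_succ n.
Proof. unfold inv_succ; apply Rinv_0_lt_compat; pose proof (pos_INR n); lra. Qed.

Lemma inv_succ_le1 n : inv_succ n <= 1.
Proof.
  unfold inv_succ; rewrite <- Rinv_1; pose proof (pos_INR n).
  apply Rinv_le_contravar; lra.
Qed.

Lemma inv_succ_le n m : (n <= m)%nat -> inv_succ m <= inv_succ n.
Proof.
  intro Hnm; apply le_INR in Hnm; pose proof (pos_INR n).
  unfold inv_succ; apply Rinv_le_contravar; lra.
Qed.

Lemma inv_succ_lt e : 0 < e -> exists m, inv_succ m < e.
Proof.
  intro He. destruct (INR_archimed (e / 2) 1) as [N HN]; [lra|].
  exists N. pose proof (pos_INR N).
  enough (inv_succ N <= e / 2) by lra.
  unfold inv_succ. apply (Rmult_le_reg_r (INR N + 1)); [lra|].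
  rewrite Rinv_l by lra. nra.
Qed.

Lemma subspace_open_restrict {T : Type} (op : topology T) (P Q : T -> Prop)
  (incl : forall y, P y -> Q y) (V : {y | Q y} -> Prop) :
  subspace op Q V -> subspace op P (fun z => V (exist Q (proj1_sig z) (incl _ (proj2_sig z)))).
Proof. intros [U [HU HUV]]. exists U; split; [exact HU|]. intro z; apply HUV. Qed.

Lemma subspace_clopen_restrict {T : Type} (op : topology T) (P Q : T -> Prop)
  (incl : forall y, P y -> Q y) (V : {y | Q y} -> Prop) :
  clopen (subspace op Q) V ->
  clopen (subspace op P) (fun z => V (exist Q (proj1_sig z) (incl _ (proj2_sig z)))).
Proof.
  intros [Hopen Hclosed].
  split; [exact (subspace_open_restrict op P Q incl V Hopen)
         |exact (subspace_open_restrict op P Q incl _ Hclosed)].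
Qed.

Section Metric.
Variables (Y : Type) (d : Y -> Y -> R).
Hypothesis hd : is_metric d.

Lemma dist_ge0 x y : 0 <= d x y. Proof. apply hd. Qed.
Lemma dist_refl x : d x x = 0. Proof. apply hd; reflexivity. Qed.
Lemma dist_sym x y : d x y = d y x. Proof. apply hd. Qed.
Lemma dist_triangle x y z : d x z <= d x y + d y z. Proof. apply hd. Qed.
Lemma dist_eq0 x y : d x y = 0 -> x = y. Proof. apply hd. Qed.

Lemma metric_open_ball c r : metric_open d (fun y => d c y < r).
Proof.
  intros y Hy. exists (r - d c y); split; [lra|].
  intros z Hz. pose proof (dist_triangle c y z). lra.
Qed.

Lemma metric_open_local (P : Y -> Prop) :
  (forall y, P y -> exists U, metric_open d U /\ U y /\ forall z, U z -> P z) ->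
  metric_open d P.
Proof.
  intros Hloc y Hy. destruct (Hloc y Hy) as [U [HU [Uy HUP]]].
  destruct (HU y Uy) as [e [He Hball]]. exists e; auto.
Qed.

Lemma metric_open_inter U V :
  metric_open d U -> metric_open d V -> metric_open d (fun y => U y /\ V y).
Proof.
  intros HU HV x [Ux Vx].
  destruct (HU x Ux) as [e1 [He1 HU1]], (HV x Vx) as [e2 [He2 HV2]].
  exists (Rmin e1 e2); split; [now apply Rmin_glb_lt|].
  intros y Hy; pose proof (Rmin_l e1 e2); pose proof (Rmin_r e1 e2).
  split; [apply HU1|apply HV2]; lra.
Qed.

Definition closure (A : Y -> Prop) (y : Y) : Prop :=
  forall e, 0 < e -> exists x, A x /\ d y x < e.

Lemma closure_compl_open A : metric_open d (fun y => ~ closure A y).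
Proof.
  intros y Hy. apply not_all_ex_not in Hy as [e He].
  apply imply_to_and in He as [He Hfar].
  exists (e / 2); split; [lra|]. intros y' Hy' Hcl. apply Hfar.
  destruct (Hcl (e / 2)) as [x [Ax Hx]]; [lra|].
  exists x; split; [exact Ax|]. pose proof (dist_triangle y y' x). lra.
Qed.

Lemma closure_seq_closed A u l :
  (forall n, closure A (u n)) -> converges d u l -> closure A l.
Proof.
  intros Hu Hl e He. destruct (Hl (e / 2)) as [N HN]; [lra|].
  destruct (Hu N (e / 2)) as [x [Ax Hx]]; [lra|]. exists x; split; [exact Ax|].
  specialize (HN N (le_n N)). rewrite dist_sym in HN.
  pose proof (dist_triangle l (u N) x). lra.
Qed.

Lemma closure_open_inter A B U y :
  closure A y -> metric_open d U -> U y -> (forall x, A x -> U x -> B x) -> closure B y.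
Proof.
  intros Hy HU Uy HAB e He. destruct (HU y Uy) as [r [Hr HUr]].
  destruct (Hy (Rmin e r)) as [x [Ax Hx]]; [now apply Rmin_glb_lt|].
  pose proof (Rmin_l e r); pose proof (Rmin_r e r).
  exists x; split; [apply HAB; [exact Ax|apply HUr; lra]|lra].
Qed.

Lemma not_closure_of_open_disjoint A U y :
  metric_open d U -> U y -> (forall x, A x -> ~ U x) -> ~ closure A y.
Proof.
  intros HU Uy Hdisj Hcl. destruct (HU y Uy) as [e [He HUe]].
  destruct (Hcl e He) as [x [Ax Hx]]. exact (Hdisj x Ax (HUe x Hx)).
Qed.

Section Alexandrov.
Hypothesis hcomplete : complete_metric d.
Variable F : Y -> Prop.
Hypothesis hF : forall u l, (forall n, F (u n)) -> converges d u l -> F l.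
Variable W : nat -> Y -> Prop.
Hypothesis hW : forall n, metric_open d (W n).

Definition radii n x : R -> Prop :=
  fun r => 0 <= r <= 1 /\ forall y, d x y < r -> W n y.

Lemma radii0 n x : radii n x 0.
Proof. split; [lra|]. intros y Hy; pose proof (dist_ge0 x y); lra. Qed.

Lemma radii_le1 n x t : radii n x t -> t <= 1.
Proof. intros [Ht _]; lra. Qed.

Definition radius n x := unit_sup (radii n x) (radii0 n x) (radii_le1 n x).

Lemma radius_ge0 n x : 0 <= radius n x.
Proof. apply unit_sup_ge0. Qed.

Lemma radius_pos n x : W n x -> 0 < radius n x.
Proof.
  intro Hx. destruct (hW n x Hx) as [e [He Hball]].
  apply Rlt_le_trans with (Rmin e 1); [apply Rmin_glb_lt; lra|].
  apply unit_sup_ub. pose proof (Rmin_l e 1); pose proof (Rmin_r e 1).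
  split; [split; [apply Rmin_case; lra|lra]|].
  intros y Hy; apply Hball; lra.
Qed.

Lemma radius_pos_mem n x : 0 < radius n x -> W n x.
Proof.
  intro Hpos. destruct (unit_sup_approx _ _ _ 0 Hpos) as [t [[_ Ht] Ht0]].
  apply Ht. rewrite dist_refl. exact Ht0.
Qed.

Lemma radius_lipschitz n x y : radius n x - d x y <= radius n y.
Proof.
  destruct (Rle_dec (radius n x - d x y) (radius n y)) as [|Hlt]; [assumption|].
  apply Rnot_le_lt in Hlt. pose proof (radius_ge0 n y); pose proof (dist_ge0 x y).
  destruct (unit_sup_approx (radii n x) (radii0 n x) (radii_le1 n x)
              (radius n y + d x y)) as [t [[Ht01 Ht] Htgt]]; [unfold radius in *; lra|].
  enough (t - d x y <= radius n y) by lra.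
  apply unit_sup_ub. split; [lra|].
  intros z Hz. apply Ht. pose proof (dist_triangle x y z). lra.
Qed.

Definition inv_radius n x := / radius n x.

Lemma inv_radius_continuous n x : 0 < radius n x -> forall e, 0 < e ->
  exists del, 0 < del /\ forall y, d x y < del -> Rabs (inv_radius n x - inv_radius n y) <= e.
Proof.
  intros Ha e He. set (a := radius n x) in *.
  exists (Rmin (a / 2) (e * a * a / 2)). split.
  { apply Rmin_glb_lt; [lra|]. assert (0 < e * a * a) by (repeat apply Rmult_lt_0_compat; auto). lra. }
  intros y Hy. pose proof (Rmin_l (a / 2) (e * a * a / 2)). pose proof (Rmin_r (a / 2) (e * a * a / 2)).
  pose proof (radius_lipschitz n x y). pose proof (radius_lipschitz n y x).
  rewrite dist_sym in H2. set (b := radius n y) in *. fold a in H1, H2.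
  assert (Hb : a / 2 <= b) by lra.
  unfold inv_radius; fold a b.
  replace (/ a - / b) with ((b - a) * / (a * b)) by (field; lra).
  rewrite Rabs_mult, (Rabs_right (/ (a * b))).
  2:{ apply Rle_ge, Rlt_le, Rinv_0_lt_compat, Rmult_lt_0_compat; lra. }
  apply (Rmult_le_reg_r (a * b)); [apply Rmult_lt_0_compat; lra|].
  rewrite Rmult_assoc, Rinv_l, Rmult_1_r by (apply Rgt_not_eq, Rmult_lt_0_compat; lra).
  assert (Rabs (b - a) <= d x y) by (apply Rabs_le; split; lra).
  assert (a * (a / 2) <= a * b) by (apply Rmult_le_compat_l; lra).
  nra.
Qed.

Definition gap n x y := Rmin (inv_succ n) (Rabs (inv_radius n x - inv_radius n y)).

Lemma gap_le n x y : gap n x y <= inv_succ n.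
Proof. apply Rmin_l. Qed.

Lemma gap_sym n x y : gap n x y = gap n y x.
Proof. unfold gap; rewrite Rabs_minus_sym; reflexivity. Qed.

Lemma gap_triangle n x y z : gap n x z <= gap n x y + gap n y z.
Proof.
  unfold gap. set (gx := inv_radius n x); set (gy := inv_radius n y); set (gz := inv_radius n z).
  pose proof (inv_succ_pos n). pose proof (Rabs_triang (gx - gy) (gy - gz)).
  replace (gx - gy + (gy - gz)) with (gx - gz) in H0 by ring.
  pose proof (Rabs_pos (gx - gy)); pose proof (Rabs_pos (gy - gz)).
  repeat apply Rmin_case_strong; intros; lra.
Qed.

Definition gaps x y : R -> Prop := fun t => t = 0 \/ exists n, t = gap n x y.

Lemma gaps0 x y : gaps x y 0.
Proof. left; reflexivity. Qed.

Lemma gaps_le1 x y t : gaps x y t -> t <= 1.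
Proof.
  intros [->|[n ->]]; [lra|]. pose proof (gap_le n x y); pose proof (inv_succ_le1 n); lra.
Qed.

Definition sup_gap x y := unit_sup (gaps x y) (gaps0 x y) (gaps_le1 x y).

Lemma sup_gap_ge0 x y : 0 <= sup_gap x y.
Proof. apply unit_sup_ge0. Qed.

Lemma gap_le_sup_gap n x y : gap n x y <= sup_gap x y.
Proof. apply unit_sup_ub; right; exists n; reflexivity. Qed.

Lemma sup_gap_le x y c : 0 <= c -> (forall n, gap n x y <= c) -> sup_gap x y <= c.
Proof. intros Hc Hgap. apply unit_sup_least. intros t [->|[n ->]]; auto. Qed.

Lemma sup_gap_refl x : sup_gap x x = 0.
Proof.
  apply Rle_antisym; [|apply sup_gap_ge0]. apply sup_gap_le; [lra|]. intro n.
  unfold gap; rewrite Rminus_diag, Rabs_R0; apply Rmin_r.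
Qed.

Lemma sup_gap_sym x y : sup_gap x y = sup_gap y x.
Proof.
  apply Rle_antisym; apply sup_gap_le; try apply sup_gap_ge0;
    intro n; rewrite gap_sym; apply gap_le_sup_gap.
Qed.

Lemma sup_gap_triangle x y z : sup_gap x z <= sup_gap x y + sup_gap y z.
Proof.
  pose proof (sup_gap_ge0 x y); pose proof (sup_gap_ge0 y z).
  apply sup_gap_le; [lra|]. intro n. pose proof (gap_triangle n x y z).
  pose proof (gap_le_sup_gap n x y); pose proof (gap_le_sup_gap n y z). lra.
Qed.

Lemma gap_continuous_upto x : (forall n, W n x) -> forall e, 0 < e -> forall N,
  exists del, 0 < del /\ forall y, d x y < del -> forall n, (n < N)%nat -> gap n x y <= e.
Proof.
  intros Hx e He N. induction N as [|N [del1 [Hdel1 Hsmall1]]].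
  - exists 1; split; [lra|]. intros; lia.
  - destruct (inv_radius_continuous N x (radius_pos N x (Hx N)) e He) as [del2 [Hdel2 Hsmall2]].
    exists (Rmin del1 del2); split; [now apply Rmin_glb_lt|].
    intros y Hy n Hn. pose proof (Rmin_l del1 del2); pose proof (Rmin_r del1 del2).
    destruct (Nat.eq_dec n N) as [->|Hne].
    + eapply Rle_trans; [apply Rmin_r|]. apply Hsmall2; lra.
    + apply Hsmall1; [lra|lia].
Qed.

(* Only finitely many gaps exceed [e], the others being truncated at [inv_succ n]. *)
Lemma sup_gap_continuous x : (forall n, W n x) -> forall e, 0 < e ->
  exists del, 0 < del /\ forall y, d x y < del -> sup_gap x y <= e.
Proof.
  intros Hx e He. destruct (inv_succ_lt e He) as [N HN].
  destruct (gap_continuous_upto x Hx e He N) as [del [Hdel Hsmall]].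
  exists del; split; [exact Hdel|]. intros y Hy. apply sup_gap_le; [lra|]. intro n.
  destruct (Compare_dec.le_lt_dec N n) as [HNn|HnN].
  - pose proof (gap_le n x y); pose proof (inv_succ_le _ _ HNn); lra.
  - apply Hsmall; assumption.
Qed.

Definition Gdelta y := F y /\ forall n, W n y.

Definition alexandrov_dist (u v : {y | Gdelta y}) :=
  d (proj1_sig u) (proj1_sig v) + sup_gap (proj1_sig u) (proj1_sig v).

Lemma alexandrov_dist_metric : is_metric alexandrov_dist.
Proof.
  unfold alexandrov_dist. split; [|split; [|split]].
  - intros [x hx] [y hy]; simpl. pose proof (dist_ge0 x y); pose proof (sup_gap_ge0 x y); lra.
  - intros [x hx] [y hy]; simpl. split.
    + intro H0. pose proof (dist_ge0 x y); pose proof (sup_gap_ge0 x y).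
      assert (x = y) by (apply dist_eq0; lra). subst y.
      f_equal; apply proof_irrelevance.
    + intro Heq. injection Heq as ->. rewrite dist_refl, sup_gap_refl. ring.
  - intros; rewrite dist_sym, sup_gap_sym; reflexivity.
  - intros [x hx] [y hy] [z hz]; simpl.
    pose proof (dist_triangle x y z); pose proof (sup_gap_triangle x y z). lra.
Qed.

Lemma dist_le_alexandrov_dist u v : d (proj1_sig u) (proj1_sig v) <= alexandrov_dist u v.
Proof. unfold alexandrov_dist; pose proof (sup_gap_ge0 (proj1_sig u) (proj1_sig v)); lra. Qed.

Lemma alexandrov_cauchy_inv_radius_bounded n u : cauchy alexandrov_dist u ->
  exists N M, 0 < M /\ forall p, (N <= p)%nat -> inv_radius n (proj1_sig (u p)) <= M.
Proof.
  intro Hu. destruct (Hu (inv_succ n) (inv_succ_pos n)) as [N HN].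
  set (x := proj1_sig (u N)). exists N, (inv_radius n x + inv_succ n). split.
  { pose proof (inv_succ_pos n). pose proof (radius_pos n x (proj2 (proj2_sig (u N)) n)).
    unfold inv_radius; pose proof (Rinv_0_lt_compat _ H0). lra. }
  intros p Hp. specialize (HN p N Hp (le_n N)). unfold alexandrov_dist in HN; fold x in HN.
  set (y := proj1_sig (u p)) in *.
  pose proof (gap_le_sup_gap n y x). pose proof (dist_ge0 y x).
  unfold gap in H. destruct (Rle_dec (inv_succ n) (Rabs (inv_radius n y - inv_radius n x))).
  - rewrite Rmin_left in H by assumption. lra.
  - pose proof (Rle_abs (inv_radius n y - inv_radius n x)). lra.
Qed.

(* Along the tail the radii stay above [/ M], and [radius] is 1-Lipschitz. *)
Lemma alexandrov_limit_mem n u l : cauchy alexandrov_dist u ->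
  converges d (fun k => proj1_sig (u k)) l -> W n l.
Proof.
  intros Hu Hl. destruct (alexandrov_cauchy_inv_radius_bounded n u Hu) as [N [M [HM Hbound]]].
  pose proof (Rinv_0_lt_compat _ HM).
  destruct (Hl (/ M / 2)) as [K HK]; [lra|].
  set (p := Nat.max N K). specialize (HK p ltac:(lia)). specialize (Hbound p ltac:(lia)).
  set (x := proj1_sig (u p)) in *. pose proof (radius_pos n x (proj2 (proj2_sig (u p)) n)).
  assert (/ M <= radius n x).
  { unfold inv_radius in Hbound. rewrite <- (Rinv_inv (radius n x)).
    apply Rinv_le_contravar; [apply Rinv_0_lt_compat|]; assumption. }
  apply radius_pos_mem. pose proof (radius_lipschitz n x l). lra.
Qed.

Lemma alexandrov_dist_small (x : {y | Gdelta y}) e : 0 < e -> exists del, 0 < del /\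
  forall x', d (proj1_sig x) (proj1_sig x') < del -> alexandrov_dist x x' < e.
Proof.
  intro He. destruct (sup_gap_continuous _ (proj2 (proj2_sig x)) (e / 2)) as [del [Hdel Hsmall]]; [lra|].
  exists (Rmin del (e / 2)); split; [apply Rmin_glb_lt; lra|].
  intros x' Hx'. pose proof (Rmin_l del (e / 2)); pose proof (Rmin_r del (e / 2)).
  unfold alexandrov_dist. assert (sup_gap (proj1_sig x) (proj1_sig x') <= e / 2) by (apply Hsmall; lra).
  lra.
Qed.

Lemma alexandrov_dist_complete : complete_metric alexandrov_dist.
Proof.
  intros u Hu.
  assert (Hc : cauchy d (fun k => proj1_sig (u k))).
  { intros e He. destruct (Hu e He) as [N HN]. exists N. intros m n Hm Hn.
    pose proof (dist_le_alexandrov_dist (u m) (u n)). specialize (HN m n Hm Hn). lra. }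
  destruct (hcomplete _ Hc) as [l Hl].
  assert (Hlim : Gdelta l).
  { split; [|intro n; exact (alexandrov_limit_mem n u l Hu Hl)].
    apply (hF (fun k => proj1_sig (u k)) l); [intro k; exact (proj1 (proj2_sig (u k)))|exact Hl]. }
  exists (exist _ l Hlim). intros e He.
  destruct (alexandrov_dist_small (exist _ l Hlim) e He) as [del [Hdel Hsmall]].
  destruct (Hl del Hdel) as [N HN]. exists N. intros n Hn.
  destruct alexandrov_dist_metric as [_ [_ [Hsym _]]]. rewrite Hsym.
  apply Hsmall; simpl; rewrite dist_sym; exact (HN n Hn).
Qed.

Lemma alexandrov_dist_topology U :
  subspace (metric_open d) Gdelta U <-> metric_open alexandrov_dist U.
Proof.
  split.
  - intros [V [HV HUV]] x Hx. apply HUV in Hx. destruct (HV _ Hx) as [e [He HVe]].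
    exists e; split; [exact He|]. intros y Hy. apply HUV, HVe.
    pose proof (dist_le_alexandrov_dist x y). lra.
  - intro HU.
    exists (fun y => exists (x : {y | Gdelta y}) del, 0 < del /\ d (proj1_sig x) y < del /\
               forall x', d (proj1_sig x) (proj1_sig x') < del -> U x'). split.
    + intros y [x [del [Hdel [Hy HUx]]]]. exists (del - d (proj1_sig x) y); split; [lra|].
      intros y' Hy'. exists x, del. repeat split; auto.
      pose proof (dist_triangle (proj1_sig x) y y'). lra.
    + intro x. split.
      * intro Hx. destruct (HU x Hx) as [e [He HUe]].
        destruct (alexandrov_dist_small x e He) as [del [Hdel Hsmall]].
        exists x, del. rewrite dist_refl. repeat split; auto.
      * intros [x0 [del [_ [Hx HU0]]]]. exact (HU0 x Hx).
Qed.

Theorem closed_Gdelta_completely_metrizable :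
  completely_metrizable (subspace (metric_open d) Gdelta).
Proof.
  exists alexandrov_dist. split; [exact alexandrov_dist_metric|].
  split; [exact alexandrov_dist_complete|exact alexandrov_dist_topology].
Qed.

End Alexandrov.

Lemma separable_dense_sequence (y0 : Y) : separable (metric_open d) ->
  exists en : nat -> Y, forall x r, 0 < r -> exists n, d (en n) x < r.
Proof.
  intros [D [[code Hcode] Hdense]].
  exists (fun n => epsilon (inhabits y0) (fun y => D y /\ code y = n)).
  intros x r Hr. destruct (Hdense (fun y => d x y < r)) as [q [Dq Hq]].
  { apply metric_open_ball. }
  { exists x; rewrite dist_refl; exact Hr. }
  exists (code q).
  destruct (epsilon_spec (inhabits y0) (fun y => D y /\ code y = code q)) as [Dy Hy];
    [exists q; auto|].
  rewrite (Hcode _ _ Dy Dq Hy), dist_sym. exact Hq.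
Qed.

(* The open conditions cutting [E'] out of the closure of [E]: a cohesiveness witness,
   a C-set of [E] at every scale [m], clopenness of the closures of the separators, and
   the C-set built from separators staying inside its ball. *)
Inductive requirement :=
  | ReqCohesive
  | ReqCset (m : nat)
  | ReqClopen (j b : nat * nat)
  | ReqCover (j k : nat * nat).

Definition decode_pair (n : nat) : (nat * nat) * (nat * nat) :=
  (of_nat (fst (of_nat n)), of_nat (snd (of_nat n))).

Definition decode_requirement (n : nat) : requirement :=
  match of_nat n with
  | (0, _) => ReqCohesive
  | (1, m) => ReqCset m
  | (2, r) => ReqClopen (fst (decode_pair r)) (snd (decode_pair r))
  | (_, r) => ReqCover (fst (decode_pair r)) (snd (decode_pair r))
  end.

Lemma decode_requirement_surj r : exists n, decode_requirement n = r.
Proof.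
  destruct r as [|m|j b|j k];
    [exists (to_nat (0, 0)%nat)|exists (to_nat (1%nat, m))
    |exists (to_nat (2%nat, to_nat (to_nat j, to_nat b)))
    |exists (to_nat (3%nat, to_nat (to_nat j, to_nat k)))];
    unfold decode_requirement, decode_pair; rewrite ?cancel_of_to; simpl;
    rewrite ?cancel_of_to; reflexivity.
Qed.

Section Extension.
Variable en : nat -> Y.
Hypothesis en_dense : forall x r, 0 < r -> exists n, d (en n) x < r.
Variable E : Y -> Prop.
Hypothesis hcoh : cohesive (subspace (metric_open d) E).
Hypothesis hazd : almost_zero_dimensional (subspace (metric_open d) E).

Local Notation SE := {y | E y}.
Local Notation topE := (subspace (metric_open d) E).

Definition ball (b : nat * nat) (y : Y) : Prop := d (en (fst b)) y < inv_succ (snd b).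

Lemma ball_open b : metric_open d (ball b).
Proof. apply metric_open_ball. Qed.

Lemma ball_refine U x :
  metric_open d U -> U x -> exists b, ball b x /\ forall y, ball b y -> U y.
Proof.
  intros HU Hx. destruct (HU x Hx) as [e [He HUe]].
  destruct (inv_succ_lt (e / 2)) as [m Hm]; [lra|].
  destruct (en_dense x (inv_succ m) (inv_succ_pos m)) as [n Hn].
  exists (n, m); split; [exact Hn|]. intros y Hy. apply HUe. unfold ball in Hy; simpl in Hy.
  rewrite dist_sym in Hn. pose proof (dist_triangle x (en n) y). lra.
Qed.

Definition trace (P : SE -> Prop) (y : Y) : Prop := exists z, P z /\ proj1_sig z = y.

Lemma not_closure_trace (V P : SE -> Prop) (z : SE) :
  topE V -> V z -> (forall w, P w -> ~ V w) -> ~ closure (trace P) (proj1_sig z).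
Proof.
  intros [U [HU HUV]] Vz Hdisj. apply HUV in Vz.
  apply (not_closure_of_open_disjoint (trace P) U); [exact HU|exact Vz|].
  intros y [w [Pw <-]] Uw. exact (Hdisj w Pw (proj2 (HUV w) Uw)).
Qed.

Lemma clopen_closures_disjoint (A : SE -> Prop) (z : SE) : clopen topE A ->
  ~ (closure (trace A) (proj1_sig z) /\ closure (trace (fun w => ~ A w)) (proj1_sig z)).
Proof.
  intros [Hopen Hclosed] [HA HnA]. destruct (classic (A z)) as [Az|Az].
  - apply (not_closure_trace A (fun w => ~ A w) z Hopen Az); auto.
  - apply (not_closure_trace (fun w => ~ A w) A z Hclosed Az); auto.
Qed.

Lemma closure_trace_split (P : SE -> Prop) y :
  closure E y -> closure (trace P) y \/ closure (trace (fun w => ~ P w)) y.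
Proof.
  intro Hy. apply NNPP; intro Hno. apply not_or_and in Hno as [HP HnP].
  apply not_all_ex_not in HP as [e1 HP]; apply imply_to_and in HP as [He1 HP].
  apply not_all_ex_not in HnP as [e2 HnP]; apply imply_to_and in HnP as [He2 HnP].
  destruct (Hy (Rmin e1 e2)) as [x [Ex Hx]]; [now apply Rmin_glb_lt|].
  pose proof (Rmin_l e1 e2); pose proof (Rmin_r e1 e2).
  destruct (classic (P (exist _ x Ex))) as [Px|Px];
    [apply HP|apply HnP]; exists x; (split; [exists (exist _ x Ex); auto|lra]).
Qed.

Lemma closure_trace_ball (P : SE -> Prop) j y : closure E y -> ball j y ->
  (forall z, ball j (proj1_sig z) -> P z) -> closure (trace P) y.
Proof.
  intros Hy Hj HP. apply (closure_open_inter E _ (ball j) y Hy (ball_open j) Hj).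
  intros x Ex Hx. exists (exist _ x Ex); split; [apply HP; exact Hx|reflexivity].
Qed.

Definition cohesive_ball b := forall A : SE -> Prop, clopen topE A ->
  (forall z, A z -> ball b (proj1_sig z)) -> ~ exists z, A z.

Lemma cohesive_ball_cover x : E x -> exists b, cohesive_ball b /\ ball b x.
Proof.
  intro Ex. destruct (hcoh (exist _ x Ex)) as [N [[U [[V [HV HUV]] [Ux HUN]]] HN]].
  apply HUV in Ux. destruct (ball_refine V x HV Ux) as [b [Hb HbV]].
  exists b; split; [|exact Hb]. intros A HA HAb. apply HN; [exact HA|].
  intros z Az. apply HUN, HUV, HbV, HAb, Az.
Qed.

Definition Cset_between j k := (forall y, ball j y -> ball k y) /\
  exists Fm : (SE -> Prop) -> Prop, (forall B, Fm B -> clopen topE B) /\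
    (forall z, ball j (proj1_sig z) -> forall B, Fm B -> B z) /\
    (forall z, (forall B, Fm B -> B z) -> ball k (proj1_sig z)).

Lemma Cset_between_cover x m : E x -> exists j k, Cset_between j k /\ snd k = m /\ ball j x.
Proof.
  intro Ex. destruct (en_dense x (inv_succ m) (inv_succ_pos m)) as [n Hn].
  set (k := (n, m)). assert (Hk : ball k x) by exact Hn.
  destruct (hazd (exist _ x Ex) (fun z => ball k (proj1_sig z)))
    as [C [[Fm [HFm HC]] [[U [[V [HV HUV]] [Ux HUC]]] HCk]]].
  { exists (fun z => ball k (proj1_sig z)). split; [|split; auto].
    exists (ball k); split; [apply ball_open|reflexivity]. }
  apply HUV in Ux.
  destruct (ball_refine (fun y => V y /\ ball k y) x) as [j [Hj HjVk]];
    [apply metric_open_inter; [exact HV|apply ball_open]|split; assumption|].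
  exists j, k. split; [|split; [reflexivity|exact Hj]].
  split; [intros y Hy; apply HjVk, Hy|]. exists Fm. split; [exact HFm|]. split.
  - intros z Hz. apply HC, HUC, HUV, HjVk, Hz.
  - intros z Hz. apply HCk, HC, Hz.
Qed.

Definition clopen_nbhd j (A : SE -> Prop) :=
  clopen topE A /\ forall z, ball j (proj1_sig z) -> A z.

Definition avoids b (A : SE -> Prop) := forall z, ball b (proj1_sig z) -> ~ A z.

(* For fixed [j], the closures of the [sep j b] intersect to the C-set around [ball j]. *)
Definition separator j b A :=
  clopen_nbhd j A /\ ((exists A', clopen_nbhd j A' /\ avoids b A') -> avoids b A).

Lemma separator_exists j b : exists A, separator j b A.
Proof.
  destruct (classic (exists A', clopen_nbhd j A' /\ avoids b A')) as [[A' [HA' Hav]]|Hno].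
  - exists A'; split; auto.
  - exists (fun _ => True). split; [|intro H; contradiction].
    split; [|auto]. split.
    + exists (fun _ => True); split; [|reflexivity]. intros y _; exists 1; split; [lra|auto].
    + exists (fun _ => False); split; [intros y []|intro; tauto].
Qed.

Definition sep j b : SE -> Prop := epsilon (inhabits (fun _ => True)) (separator j b).

Lemma sep_spec j b : separator j b (sep j b).
Proof. exact (epsilon_spec (inhabits (fun _ : SE => True)) _ (separator_exists j b)). Qed.

Definition holds (r : requirement) (y : Y) : Prop :=
  match r with
  | ReqCohesive => exists b, cohesive_ball b /\ ball b y
  | ReqCset m => exists j k, Cset_between j k /\ snd k = m /\ ball j y
  | ReqClopen j b => ~ (closure (trace (sep j b)) y /\ closure (trace (fun w => ~ sep j b w)) y)
  | ReqCover j k => Cset_between j k -> ball k y \/ exists b, ~ closure (trace (sep j b)) y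
  end.

Lemma holds_open r : metric_open d (holds r).
Proof.
  apply metric_open_local. intros y Hy. destruct r as [|m|j b|j k]; simpl in Hy.
  - destruct Hy as [b [Hb Hy]]. exists (ball b); split; [apply ball_open|].
    split; [exact Hy|]. intros z Hz; exists b; auto.
  - destruct Hy as [j [k [Hjk [Hm Hy]]]]. exists (ball j); split; [apply ball_open|].
    split; [exact Hy|]. intros z Hz; exists j, k; auto.
  - apply not_and_or in Hy as [Hy|Hy]; (eexists; split; [apply closure_compl_open|]);
      (split; [exact Hy|]); intros z Hz [H1 H2]; auto.
  - destruct (classic (Cset_between j k)) as [Hjk|Hjk].
    + destruct (Hy Hjk) as [Hk|[b Hb]].
      * exists (ball k); split; [apply ball_open|]. split; [exact Hk|]. intros z Hz _; left; exact Hz.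
      * eexists; split; [apply closure_compl_open|]. split; [exact Hb|].
        intros z Hz _; right; exists b; exact Hz.
    + exists (fun _ => True); split; [intros w _; exists 1; split; [lra|auto]|].
      split; [exact I|]. intros z _ Hjk'; contradiction.
Qed.

(* A point of [E] outside [ball k] misses some [B] of the family; a ball around it avoiding [B]
   forces [sep j b] to avoid that ball too. *)
Lemma E_holds_cover x j k : E x -> Cset_between j k ->
  ball k x \/ exists b, ~ closure (trace (sep j b)) x.
Proof.
  intros Ex [_ [Fm [HFm [Hin Hout]]]]. destruct (classic (ball k x)) as [Hk|Hk]; [left; exact Hk|right].
  assert (HB : exists B, Fm B /\ ~ B (exist _ x Ex)).
  { apply NNPP; intro Hno. apply Hk, (Hout (exist _ x Ex)). intros B HB.
    apply NNPP; intro HBx. apply Hno; exists B; auto. }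
  destruct HB as [B [HB HBx]]. destruct (HFm B HB) as [_ [U [HU HUB]]].
  apply HUB in HBx. destruct (ball_refine U x HU HBx) as [b [Hb HbU]].
  exists b. destruct (sep_spec j b) as [_ Havoid].
  assert (Hav : avoids b (sep j b)).
  { apply Havoid. exists B. split; [split; [apply HFm, HB|intros z Hz; apply Hin; auto]|].
    intros z Hz. apply HUB, HbU, Hz. }
  apply (not_closure_of_open_disjoint _ (ball b)); [apply ball_open|exact Hb|].
  intros y [z [Hz <-]]. intro Hzb. exact (Hav z Hzb Hz).
Qed.

Lemma E_holds x r : E x -> holds r x.
Proof.
  intro Ex. destruct r as [|m|j b|j k]; simpl.
  - apply cohesive_ball_cover, Ex.
  - apply Cset_between_cover, Ex.
  - exact (clopen_closures_disjoint (sep j b) (exist _ x Ex) (proj1 (proj1 (sep_spec j b)))).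
  - apply E_holds_cover, Ex.
Qed.

Definition extension := Gdelta (closure E) (fun n => holds (decode_requirement n)).

Local Notation topX := (subspace (metric_open d) extension).

Lemma extension_holds y r : extension y -> holds r y.
Proof. intros [_ Hy]. destruct (decode_requirement_surj r) as [n <-]. apply Hy. Qed.

Lemma extension_closure y : extension y -> closure E y.
Proof. intros [Hy _]; exact Hy. Qed.

Lemma E_sub_extension x : E x -> extension x.
Proof.
  intro Ex. split; [|intro n; apply E_holds, Ex].
  intros e He. exists x; rewrite dist_refl; auto.
Qed.

Lemma extension_open_meets_E (V : {y | extension y} -> Prop) z :
  topX V -> V z -> exists w : SE, V (exist _ (proj1_sig w) (E_sub_extension _ (proj2_sig w))).
Proof.
  intros [U [HU HUV]] Vz. apply HUV in Vz. destruct (HU _ Vz) as [e [He HUe]].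
  destruct (extension_closure _ (proj2_sig z) e He) as [y [Ey Hy]].
  exists (exist _ y Ey). apply HUV, HUe, Hy.
Qed.

Lemma extension_cohesive : cohesive topX.
Proof.
  intro x. destruct (extension_holds _ ReqCohesive (proj2_sig x)) as [b [Hb Hx]].
  exists (fun z => ball b (proj1_sig z)). split.
  { exists (fun z => ball b (proj1_sig z)). split; [|split; auto].
    exists (ball b); split; [apply ball_open|reflexivity]. }
  intros A HA HAb [z Az].
  apply (Hb _ (subspace_clopen_restrict _ E extension E_sub_extension A HA)).
  - intros w Hw. exact (HAb _ Hw).
  - exact (extension_open_meets_E A z (proj1 HA) Az).
Qed.

Lemma closure_sep_clopen j b : clopen topX (fun z => closure (trace (sep j b)) (proj1_sig z)).
Proof.
  split.
  - exists (fun y => ~ closure (trace (fun w => ~ sep j b w)) y).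
    split; [apply closure_compl_open|]. intro z.
    pose proof (extension_holds _ (ReqClopen j b) (proj2_sig z)) as Hz; simpl in Hz.
    destruct (closure_trace_split (sep j b) _ (extension_closure _ (proj2_sig z))); tauto.
  - exists (fun y => ~ closure (trace (sep j b)) y). split; [apply closure_compl_open|reflexivity].
Qed.

Definition sep_core j (z : {y | extension y}) : Prop :=
  forall b, closure (trace (sep j b)) (proj1_sig z).

Lemma sep_core_Cset j : C_set topX (sep_core j).
Proof.
  exists (fun B => exists b, B = fun z => closure (trace (sep j b)) (proj1_sig z)). split.
  - intros B [b ->]. apply closure_sep_clopen.
  - intro z. split.
    + intros Hz B [b ->]. apply Hz.
    + intros Hz b. exact (Hz _ (ex_intro _ b eq_refl)).
Qed.

Lemma sep_core_nbhd j x : ball j (proj1_sig x) -> neighborhood topX x (sep_core j).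
Proof.
  intro Hx. exists (fun z => ball j (proj1_sig z)). split.
  { exists (ball j); split; [apply ball_open|reflexivity]. }
  split; [exact Hx|]. intros z Hz b.
  apply (closure_trace_ball _ j); [apply extension_closure, proj2_sig|exact Hz|].
  exact (proj2 (proj1 (sep_spec j b))).
Qed.

Lemma sep_core_sub_ball j k z : Cset_between j k -> sep_core j z -> ball k (proj1_sig z).
Proof.
  intros Hjk Hz.
  destruct (extension_holds _ (ReqCover j k) (proj2_sig z) Hjk) as [Hk|[b Hb]]; [exact Hk|].
  exfalso; exact (Hb (Hz b)).
Qed.

Lemma extension_azd : almost_zero_dimensional topX.
Proof.
  intros x N [U [[V [HV HUV]] [Ux HUN]]].
  apply HUV in Ux. destruct (HV _ Ux) as [e [He HVe]].
  destruct (inv_succ_lt (e / 2)) as [m Hm]; [lra|].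
  destruct (extension_holds _ (ReqCset m) (proj2_sig x)) as [j [k [Hjk [Hkm Hjx]]]].
  exists (sep_core j). split; [apply sep_core_Cset|]. split; [exact (sep_core_nbhd j x Hjx)|].
  intros z Hz. apply HUN, HUV, HVe.
  pose proof (sep_core_sub_ball j k z Hjk Hz) as Hzk. pose proof (proj1 Hjk _ Hjx) as Hxk.
  unfold ball in Hxk, Hzk; rewrite Hkm in Hxk, Hzk. rewrite dist_sym in Hxk.
  pose proof (dist_triangle (proj1_sig x) (en (fst k)) (proj1_sig z)). lra.
Qed.

End Extension.
End Metric.

Theorem corollary3p2 (Y : Type) (d : Y -> Y -> R)
  (hd : is_metric d) (hcomplete : complete_metric d)
  (hsep : separable (metric_open d))
  (E : Y -> Prop) (hne : exists y, E y)
  (hcoh : cohesive (subspace (metric_open d) E))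
  (hazd : almost_zero_dimensional (subspace (metric_open d) E)) :
  exists E' : Y -> Prop,
    (forall y, E y -> E' y) /\
    completely_metrizable (subspace (metric_open d) E') /\
    cohesive (subspace (metric_open d) E') /\
    almost_zero_dimensional (subspace (metric_open d) E').
Proof.
  destruct hne as [y0 _].
  destruct (separable_dense_sequence Y d hd y0 hsep) as [en Hen].
  exists (extension Y d en E). split; [|split; [|split]].
  - exact (E_sub_extension Y d hd en Hen E hcoh hazd).
  - apply closed_Gdelta_completely_metrizable; [exact hd|exact hcomplete| |].
    + apply (closure_seq_closed Y d hd E).
    + intro n; apply (holds_open Y d hd en E).
  - exact (extension_cohesive Y d hd en Hen E hcoh hazd).
  - exact (extension_azd Y d hd en E).
Qed.
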